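(* Let $L$ be a finite-dimensional Lie algebra over a field of characteristic zero. Then $E(L)$ is a characteristic ideal of $L$ (an ideal invariant under every derivation of $L$), and consequently $E(L)\subseteq N(L)$.
   Context: For $x\in L$, $\operatorname{ad}x:L\to L$ is $\operatorname{ad}x(y)=[y,x]$, and $E_L(x)=\{y\in L\mid (\operatorname{ad}x)^n(y)=0 \text{ for some } n\in\mathbb{N}\}$. An element $y$ is an Engel element of $L$ if $y\in E_L(x)$ for all $x\in L$; $E(L)$ denotes the set of all Engel elements of $L$. $N(L)$ denotes the nilradical of $L$, i.e. its largest nilpotent ideal. *)

From HB Require Import structures.
From mathcomp Require Import all_boot all_order all_algebra.
Set Implicit Arguments. Unset Strict Implicit. Unset Printing Implicit Defensive.
Import GRing.Theory.
Local Open Scope ring_scope.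

Section Lie.
Variables (F : fieldType) (V : vectType F).

Record is_lie_bracket (br : V -> V -> V) : Prop := {
  lie_linl : forall (a : F) (x y z : V), br (a *: x + y) z = a *: br x z + br y z;
  lie_linr : forall (a : F) (x y z : V), br z (a *: x + y) = a *: br z x + br z y;
  lie_alt : forall x : V, br x x = 0;
  lie_jacobi : forall x y z : V,
      br x (br y z) + br y (br z x) + br z (br x y) = 0
}.

Variable br : V -> V -> V.

(* ad x (y) = [y, x], as in the paper *)
Definition ad (x : V) : V -> V := fun y => br y x.

Definition engel_set (x : V) : V -> Prop :=
  fun y => exists n : nat, iter n (ad x) y = 0.

Definition engel_elt (y : V) : Prop := forall x : V, engel_set x y.

(* ideals (subspaces I with [I, L] <= I; by anticommutativity also [L, I] <= I) *)
Definition is_ideal (I : {vspace V}) : Prop :=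
  forall x y : V, x \in I -> br x y \in I.

Definition is_derivation (D : V -> V) : Prop :=
  (forall (a : F) (x y : V), D (a *: x + y) = a *: D x + D y) /\
  (forall x y : V, D (br x y) = br (D x) y + br x (D y)).

Definition is_char_ideal (I : {vspace V}) : Prop :=
  is_ideal I /\ forall D : V -> V, is_derivation D -> forall x, x \in I -> D x \in I.

(* [I, J] : the subspace spanned by all brackets [u, v], u in I, v in J
   (by bilinearity, spanned by brackets of basis vectors) *)
Definition brspace (I J : {vspace V}) : {vspace V} :=
  <<[seq br u v | u <- vbasis I, v <- vbasis J]>>%VS.

(* lower central series of I as a Lie algebra: I^1 = I, I^(k+1) = [I, I^k] *)
Fixpoint lcs (I : {vspace V}) (k : nat) : {vspace V} :=
  match k with
  | 0 => I
  | k'.+1 => brspace I (lcs I k')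
  end.

Definition is_nilpotent (I : {vspace V}) : Prop := exists k : nat, lcs I k = 0%VS.

Definition is_nilradical (N : {vspace V}) : Prop :=
  [/\ is_ideal N, is_nilpotent N &
      forall I : {vspace V}, is_ideal I -> is_nilpotent I -> (I <= N)%VS].

End Lie.

From HB Require Import structures.
From mathcomp Require Import all_boot all_order all_algebra.
From Stdlib Require Import Classical.
Set Implicit Arguments. Unset Strict Implicit. Unset Printing Implicit Defensive.
Import GRing.Theory.
Local Open Scope ring_scope.

(* For fixed [x], the nilpotency index of [ad x] at a vector can be taken to be
   [dim V], so the Engel elements form a subspace [E].  If [y] is Engel and [D]
   is a derivation, [(ad (x + t D x))^n y = 0] for all [t]; the coefficient of
   [t] in this polynomial is [D ((ad x)^n y) - (ad x)^n (D y)], and in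
   characteristic zero all coefficients vanish, so [D y] is Engel.  Inner
   derivations make [E] an ideal, every [ad a] with [a] in [E] is nilpotent on
   [E], and Engel's theorem makes [E] a nilpotent ideal, hence a subspace of the
   nilradical. *)

Lemma ex_max_nat (P : nat -> Prop) b :
  (exists n, P n) -> (forall n, P n -> (n <= b)%N) ->
  exists2 n, P n & forall m, P m -> (m <= n)%N.
Proof.
elim: b => [|b IHb] [n Pn] leb.
  by exists n => // m /leb; rewrite leqn0 => /eqP ->.
case: (classic (P b.+1)) => [Pb | nPb]; first by exists b.+1 => // m /leb.
apply: IHb; first by exists n.
move=> m Pm; move: (leb m Pm); rewrite leq_eqVlt => /orP[/eqP eq_m | //].
by rewrite eq_m in Pm.
Qed.

Section VspaceFacts.
Variables (F : fieldType) (V : vectType F).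

Lemma ltn_dimvS (U W : {vspace V}) v :
  (U <= W)%VS -> v \in W -> v \notin U -> (\dim U < \dim W)%N.
Proof.
move=> sUW vW vU; rewrite (ltn_leqif (dimv_leqif_sup sUW)).
by apply: contra vU => /subvP; apply.
Qed.

Lemma dimv_le_dim (U : {vspace V}) : (\dim U <= dim V)%N.
Proof. by rewrite -dimvf dimvS ?subvf. Qed.

(* A largest subspace on which [P] holds must contain every vector satisfying [P]. *)
Lemma vspace_of_linear_pred (P : V -> Prop) : P 0 ->
  (forall a u v, P u -> P v -> P (a *: u + v)) ->
  exists E : {vspace V}, forall v, v \in E <-> P v.
Proof.
move=> P0 PZD.
pose sub_dim n := exists U : {vspace V}, (forall u, u \in U -> P u) /\ \dim U = n.
have [n [U [PU dimU]] maxU] : exists2 n, sub_dim n & forall m, sub_dim m -> (m <= n)%N.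
  apply: (ex_max_nat (b := dim V)); last by move=> m [U [_ <-]]; apply: dimv_le_dim.
  by exists 0%N, 0%VS; split; [move=> u; rewrite memv0 => /eqP -> | rewrite dimv0].
exists U => v; split; first exact: PU.
move=> Pv; case: (boolP (v \in U)) => // vU; exfalso.
have : sub_dim (\dim (U + <[v]>)).
  exists (U + <[v]>)%VS; split => // w /memv_addP[u uU [_ /vlineP[a ->] ->]].
  by rewrite addrC; apply: PZD; last exact: PU.
move/maxU; rewrite -dimU leqNgt (ltn_dimvS (v := v)) ?addvSl //.
by rewrite memvE addvSr.
Qed.

End VspaceFacts.

Section Iterates.
Variables (F : fieldType) (V : vectType F) (f : V -> V).
Hypothesis f_lin : forall a u v, f (a *: u + v) = a *: f u + f v.

Lemma iter_lin n a u v : iter n f (a *: u + v) = a *: iter n f u + iter n f v.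
Proof. by elim: n => //= n ->; rewrite f_lin. Qed.

Lemma iter_lin0 n : iter n f 0 = 0.
Proof. by have := iter_lin n (-1) 0 0; rewrite scaler0 addr0 scaleN1r addNr. Qed.

Lemma lin0 : f 0 = 0.
Proof. exact: (iter_lin0 1). Qed.

Lemma linD u v : f (u + v) = f u + f v.
Proof. by have := f_lin 1 u v; rewrite !scale1r. Qed.

Lemma linZ a u : f (a *: u) = a *: f u.
Proof. by rewrite -[a *: u]addr0 f_lin lin0 addr0. Qed.

Lemma lin_sum n (g : 'I_n -> V) : f (\sum_(i < n) g i) = \sum_(i < n) f (g i).
Proof. exact: (big_morph f linD lin0). Qed.

Definition ker_stationary_at i := forall v, iter i.+1 f v = 0 -> iter i f v = 0.

Lemma ker_stationaryS i : ker_stationary_at i -> ker_stationary_at i.+1.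
Proof. by move=> stat_i v; rewrite iterSr => /stat_i; rewrite -iterSr. Qed.

Lemma ker_stationary_from i m v :
  ker_stationary_at i -> (i <= m)%N -> iter m f v = 0 -> iter i f v = 0.
Proof.
move=> stat_i /subnK <-; elim: (m - i)%N => // k IHk.
have stat_ki : ker_stationary_at (k + i).
  by elim: k {IHk} => // k; rewrite addSn; apply: ker_stationaryS.
by rewrite addSn => /stat_ki.
Qed.

Lemma ker_iter_vspace j : exists K : {vspace V}, forall v, v \in K <-> iter j f v = 0.
Proof.
apply: vspace_of_linear_pred; first exact: iter_lin0.
by move=> a u v fu0 fv0; rewrite iter_lin fu0 fv0 scaler0 addr0.
Qed.

(* The kernels of the powers of [f] increase with [j]; they cannot do so strictly
   more than [dim V] times. *)
Lemma ker_stationary_le_dim : exists2 i, (i <= dim V)%N & ker_stationary_at i.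
Proof.
apply: NNPP => no_stat.
suff grow j : (j <= (dim V).+1)%N -> exists2 K : {vspace V},
    (forall v, v \in K <-> iter j f v = 0) & (j <= \dim K)%N.
  by have [K _ le_K] := grow _ (leqnn _); rewrite ltnNge dimv_le_dim in le_K.
elim: j => [|j IHj] le_j; first by have [K memK] := ker_iter_vspace 0; exists K.
have [Kj memKj le_dimKj] := IHj (ltnW le_j).
have [K memK] := ker_iter_vspace j.+1.
have [v fv0 fv_neq0] : exists2 v, iter j.+1 f v = 0 & iter j f v <> 0.
  apply: NNPP => no_v; apply: no_stat; exists j => // w fw0.
  by apply: NNPP => fw_neq0; apply: no_v; exists w.
exists K => //; apply: leq_ltn_trans le_dimKj (ltn_dimvS (v := v) _ _ _).
- by apply/subvP => w /memKj fw0; apply/memK; rewrite iterS fw0 lin0.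
- exact/memK.
- by apply/negP => /memKj.
Qed.

Lemma iter_dim_eq0 n v : iter n f v = 0 -> iter (dim V) f v = 0.
Proof.
have [i le_i stat_i] := ker_stationary_le_dim; move=> fnv0.
suff fiv0 : iter i f v = 0 by rewrite -(subnK le_i) iterD fiv0 iter_lin0.
case: (leqP i n) => [le_in | lt_ni]; first exact: ker_stationary_from le_in fnv0.
by rewrite -(subnK (ltnW lt_ni)) iterD fnv0 iter_lin0.
Qed.

End Iterates.

Section VectorPolynomials.
Variables (F : fieldType) (V : vectType F).
Hypothesis charF0 : [pchar F] =i pred0.

Lemma natr_inj_pchar0 : injective (fun n : nat => n%:R : F).
Proof.
suff le_inj m n : (m <= n)%N -> m%:R = n%:R :> F -> m = n.
  move=> m n /= eq_mn; case: (leqP m n) => [le_mn | /ltnW le_nm].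
    exact: le_inj.
  exact/esym/le_inj.
move=> le_mn eq_mn; apply/eqP; rewrite eqn_leq le_mn /= -subn_eq0.
by rewrite -(proj1 (pcharf0P F) charF0) natrB // eq_mn subrr.
Qed.

(* In characteristic zero [F] is infinite, so every coordinate of the
   polynomial has too many roots. *)
Lemma vpoly_coef_eq0 n (c : nat -> V) :
  (forall t : F, \sum_(m < n) t ^+ m *: c m = 0) -> forall m, (m < n)%N -> c m = 0.
Proof.
move=> vanish m lt_mn; rewrite (coord_vbasis (memvf (c m))) big1 // => i _.
pose p := \poly_(j < n) coord (vbasis fullv) i (c j).
have root_p t : root p t.
  apply/rootP; rewrite horner_poly.
  have := congr1 (coord (vbasis fullv) i) (vanish t).
  rewrite linear_sum linear0 => sum0; rewrite -[RHS]sum0; apply: eq_bigr => j _.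
  by rewrite linearZ mulrC.
have p0 : p = 0.
  apply: (roots_geq_poly_eq0 (rs := [seq k%:R | k <- iota 0 (size p)])).
  - by apply/allP => t _; apply: root_p.
  - by rewrite map_inj_uniq ?iota_uniq //; apply: natr_inj_pchar0.
  - by rewrite size_map size_iota.
have := congr1 (fun q : {poly F} => q`_m) p0.
by rewrite coef_poly lt_mn coef0 => ->; rewrite scale0r.
Qed.

End VectorPolynomials.

Section Pencil.
Variables (F : fieldType) (V : vectType F) (A B : V -> V).
Hypothesis A_lin : forall a u v, A (a *: u + v) = a *: A u + A v.
Hypothesis B_lin : forall a u v, B (a *: u + v) = a *: B u + B v.

Definition pencil (t : F) (u : V) := A u + t *: B u.

(* [pencil_coef k m v] is the coefficient of [t ^+ m] in [(A + t B)^k v]. *)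
Fixpoint pencil_coef (k m : nat) (v : V) : V :=
  match k with
  | 0 => if m == 0%N then v else 0
  | k'.+1 => A (pencil_coef k' m v) + if m is m'.+1 then B (pencil_coef k' m' v) else 0
  end.

Lemma pencil_coef0 k v : pencil_coef k 0 v = iter k A v.
Proof. by elim: k => //= k ->; rewrite addr0. Qed.

Lemma pencil_coef_gt k m v : (k < m)%N -> pencil_coef k m v = 0.
Proof.
elim: k m => [|k IHk] [|m] //= lt_km.
by rewrite !IHk ?(lin0 A_lin) ?(lin0 B_lin) ?addr0 //; apply: ltnW.
Qed.

Lemma iter_pencil k t v :
  iter k (pencil t) v = \sum_(m < k.+1) t ^+ m *: pencil_coef k m v.
Proof.
elim: k => [|k IHk]; first by rewrite big_ord1 /= scale1r.
have sumA : \sum_(m < k.+2) t ^+ m *: A (pencil_coef k m v) =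
    \sum_(m < k.+1) A (t ^+ m *: pencil_coef k m v).
  rewrite big_ord_recr /= pencil_coef_gt // (lin0 A_lin) scaler0 addr0.
  by apply: eq_bigr => m _; rewrite (linZ A_lin).
have sumB : \sum_(m < k.+2)
      t ^+ m *: (if nat_of_ord m is m'.+1 then B (pencil_coef k m' v) else 0) =
    \sum_(m < k.+1) t *: B (t ^+ m *: pencil_coef k m v).
  rewrite big_ord_recl /= scaler0 add0r.
  by apply: eq_bigr => m _; rewrite (linZ B_lin) scalerA exprS.
rewrite iterS IHk /pencil (lin_sum A_lin) (lin_sum B_lin) scaler_sumr.
by rewrite -sumA -sumB -big_split; apply: eq_bigr => m _; rewrite scalerDr.
Qed.

Lemma pencil_coef_eq0 k v : [pchar F] =i pred0 ->
  (forall t, iter k (pencil t) v = 0) -> forall m, pencil_coef k m v = 0.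
Proof.
move=> charF0 vanish m; case: (leqP m k) => [le_mk | /pencil_coef_gt //].
apply: (vpoly_coef_eq0 charF0 (n := k.+1) (c := pencil_coef k ^~ v)) => // t.
by rewrite /= -iter_pencil.
Qed.

Lemma iter_commutator (D : V -> V) k v :
  (forall u w, D (u + w) = D u + D w) -> (forall u, D (A u) = A (D u) + B u) ->
  D (iter k A v) = iter k A (D v) + pencil_coef k 1 v.
Proof.
move=> D_add DA; elim: k => /= [|k IHk]; first by rewrite addr0.
by rewrite DA IHk (linD A_lin) pencil_coef0 addrA.
Qed.

End Pencil.

Section LieAlgebra.
Variables (F : fieldType) (V : vectType F) (br : V -> V -> V).
Hypothesis hL : is_lie_bracket br.

Lemma ad_lin x a u v : ad br x (a *: u + v) = a *: ad br x u + ad br x v.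
Proof. exact: lie_linl. Qed.

Lemma br_linr x a u v : br x (a *: u + v) = a *: br x u + br x v.
Proof. exact: lie_linr. Qed.

Lemma brDl x u v : br (u + v) x = br u x + br v x.
Proof. exact: (linD (ad_lin x)). Qed.

Lemma brDr x u v : br x (u + v) = br x u + br x v.
Proof. exact: (linD (br_linr x)). Qed.

Lemma brZl x a u : br (a *: u) x = a *: br u x.
Proof. exact: (linZ (ad_lin x)). Qed.

Lemma brZr x a u : br x (a *: u) = a *: br x u.
Proof. exact: (linZ (br_linr x)). Qed.

Lemma brNl x u : br (- u) x = - br u x.
Proof. by rewrite -scaleN1r brZl scaleN1r. Qed.

Lemma br0l x : br 0 x = 0.
Proof. exact: (lin0 (ad_lin x)). Qed.

Lemma br0r x : br x 0 = 0.
Proof. exact: (lin0 (br_linr x)). Qed.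

Lemma br_anti x y : br x y = - br y x.
Proof.
have := lie_alt hL (x + y).
rewrite brDl !brDr !lie_alt // add0r addr0.
by move/eqP; rewrite addr_eq0 => /eqP.
Qed.

Lemma jacobi_leibniz x y z : br (br x y) z = br (br x z) y + br x (br y z).
Proof.
have := lie_jacobi hL x y z.
rewrite [br z (br x y)]br_anti [br y (br z x)]br_anti [br z x]br_anti.
rewrite brNl opprK.
by move/subr0_eq => <-; rewrite addrC.
Qed.

Lemma ad_derivation z : is_derivation br (ad br z).
Proof. by split=> [a u v | u v]; [exact: ad_lin | exact: jacobi_leibniz]. Qed.

Lemma ad_pencil x w t : ad br (x + t *: w) =1 pencil (ad br x) (ad br w) t.
Proof. by move=> u; rewrite /ad /pencil brDr brZr. Qed.

Lemma engel_eltP y : engel_elt br y <-> forall x, iter (dim V) (ad br x) y = 0.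
Proof.
split=> [engel_y x | engel_y x]; last by exists (dim V).
by have [n] := engel_y x; apply: iter_dim_eq0; apply: ad_lin.
Qed.

Lemma engel_elt_vspace : exists E : {vspace V}, forall y, y \in E <-> engel_elt br y.
Proof.
apply: vspace_of_linear_pred => [|a u v /engel_eltP Eu /engel_eltP Ev];
  apply/engel_eltP => x; first exact: (iter_lin0 (ad_lin x)).
by rewrite (iter_lin (ad_lin x)) Eu Ev scaler0 addr0.
Qed.

Lemma engel_elt_derivation D y : [pchar F] =i pred0 ->
  is_derivation br D -> engel_elt br y -> engel_elt br (D y).
Proof.
move=> charF0 [D_lin D_br] /engel_eltP engel_y; apply/engel_eltP => x.
have := iter_commutator (ad_lin x) (B := ad br (D x)) (dim V) y (linD D_lin) (D_br ^~ x).
rewrite engel_y (lin0 D_lin) (pencil_coef_eq0 (ad_lin x) (ad_lin (D x))) ?addr0 //.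
by move=> t; rewrite -(eq_iter (ad_pencil x (D x) t)).
Qed.

End LieAlgebra.

Lemma iter_entry (T : Type) (P : pred T) (f : T -> T) x n :
  ~~ P x -> P (iter n f x) -> exists i, ~~ P (iter i f x) /\ P (iter i.+1 f x).
Proof.
move=> Px; elim: n => [|n IHn] Pfx; first by rewrite Pfx in Px.
by case: (boolP (P (iter n f x))) => [/IHn | Pn]; last exists n.
Qed.

Section EngelTheorem.
Variables (F : fieldType) (V : vectType F) (br : V -> V -> V).
Hypothesis hL : is_lie_bracket br.

Definition br_stable (K U : {vspace V}) := forall u k, u \in U -> k \in K -> br u k \in U.

Definition ad_nilpotent_on (K U : {vspace V}) :=
  forall z u, z \in K -> u \in U -> exists n, iter n (ad br z) u = 0.

Lemma br_stableS (K K' U : {vspace V}) :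
  (K' <= K)%VS -> br_stable K U -> br_stable K' U.
Proof. by move=> /subvP sK'K stabU u k uU /sK'K; apply: stabU. Qed.

Lemma ad_nilpotent_onS (K K' U U' : {vspace V}) :
  (K' <= K)%VS -> (U' <= U)%VS -> ad_nilpotent_on K U -> ad_nilpotent_on K' U'.
Proof. by move=> /subvP sK'K /subvP sU'U nilKU z u /sK'K zK /sU'U; apply: nilKU. Qed.

Lemma br_stable_add_line (M : {vspace V}) z :
  br_stable M M -> (forall m, m \in M -> br z m \in M) ->
  br_stable (M + <[z]>) (M + <[z]>).
Proof.
move=> stabM norm_z u k /memv_addP[m mM [_ /vlineP[a ->] ->]].
move=> /memv_addP[m' m'M [_ /vlineP[b ->] ->]].
have inM w : w \in M -> w \in (M + <[z]>)%VS by apply: (subvP (addvSl M <[z]>)).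
rewrite (brDl hL) !(brDr hL) !(brZl hL) !(brZr hL) (lie_alt hL) !scaler0 addr0 -addrA.
apply: memvD; first exact/inM/stabM.
apply: memvD; apply/memvZ/inM; last exact: norm_z.
by rewrite (br_anti hL) memvN norm_z.
Qed.

Lemma exists_max_proper_subalgebra (K : {vspace V}) :
  K != 0%VS -> exists M : {vspace V},
    [/\ br_stable M M, (M <= K)%VS, ~~ (K <= M)%VS &
    forall M' : {vspace V}, br_stable M' M' -> (M' <= K)%VS -> ~~ (K <= M')%VS ->
      (\dim M' <= \dim M)%N].
Proof.
move=> K_neq0.
pose proper_dim n := exists M : {vspace V},
  [/\ br_stable M M, (M <= K)%VS, ~~ (K <= M)%VS & \dim M = n].
have [n [M [stabM sMK sKM dimM]] maxM] :
    exists2 n, proper_dim n & forall m, proper_dim m -> (m <= n)%N.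
  apply: (ex_max_nat (b := \dim K)); last by move=> m [M [_ sMK _ <-]]; apply: dimvS.
  exists 0%N, 0%VS; split; rewrite ?sub0v ?subv0 ?dimv0 //.
  by move=> u k; rewrite memv0 => /eqP -> _; rewrite (br0l hL) mem0v.
exists M; split=> // M' stabM' sM'K sKM'.
by rewrite dimM; apply: maxM; exists M'.
Qed.

Lemma centralizer_mod_ad_stable (M W : {vspace V}) z u :
  (forall w, w \in W -> br w z \in W) ->
  (forall m, m \in M -> br z m \in M) ->
  (forall m, m \in M -> br u m \in W) -> forall m, m \in M -> br (br u z) m \in W.
Proof.
move=> stab_z norm_z cent_u m mM.
by rewrite (jacobi_leibniz hL); apply: memvD; [apply/stab_z/cent_u | apply/cent_u/norm_z].
Qed.

(* Engel's theorem for the action of [K] on the quotient [U / W]. *)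
Lemma engel_quotient (K U W : {vspace V}) :
  br_stable K K -> ad_nilpotent_on K K -> ad_nilpotent_on K U ->
  br_stable K U -> br_stable K W -> ~~ (U <= W)%VS ->
  exists2 v, v \in U /\ v \notin W & forall k, k \in K -> br v k \in W.
Proof.
have [n] := ubnP (\dim K); elim: n K U W => // n IHn K U W lt_Kn.
move=> stabK nilK nilU stabU stabW sUW.
case: (eqVneq K 0%VS) => [-> | K_neq0].
  have [v vU vW] := subvPn sUW; exists v => // k; rewrite memv0 => /eqP ->.
  by rewrite (br0r hL) mem0v.
have [M [stabM sMK sKM maxM]] := exists_max_proper_subalgebra K_neq0.
have lt_Mn : (\dim M < n)%N.
  by rewrite -ltnS (leq_trans _ lt_Kn) // ltnS (ltn_leqif (dimv_leqif_sup sMK)).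
have [z [zK zM] norm_z] : exists2 z, z \in K /\ z \notin M &
    forall m, m \in M -> br z m \in M.
  apply: IHn => //; first exact: ad_nilpotent_onS nilK.
  - exact: ad_nilpotent_onS nilK.
  - exact: br_stableS stabK.
have sKMz : (K <= M + <[z]>)%VS.
  apply: contraT => sKMz.
  have sMzK : (M + <[z]> <= K)%VS by rewrite subv_add sMK -memvE.
  have := maxM _ (br_stable_add_line stabM norm_z) sMzK sKMz.
  by rewrite leqNgt (ltn_dimvS (v := z)) ?addvSl // memvE addvSr.
have [u [uU uW] cent_u] : exists2 u, u \in U /\ u \notin W &
    forall m, m \in M -> br u m \in W.
  apply: IHn => //; first exact: ad_nilpotent_onS nilK.
  - exact: ad_nilpotent_onS nilU.
  - exact: br_stableS stabU.
  - exact: br_stableS stabW.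
pose in_U_cent v := v \in U /\ forall m, m \in M -> br v m \in W.
have iter_z j : in_U_cent (iter j (ad br z) u).
  elim: j => [|j [vU cent_v]] //=; split; first exact: stabU.
  by apply: centralizer_mod_ad_stable => // w wW; apply: stabW.
have [N zNu] := nilU z u zK uU.
have [i [ziuW zi1uW]] : exists i, iter i (ad br z) u \notin W /\ iter i.+1 (ad br z) u \in W.
  by apply: (iter_entry (P := fun v => v \in W) (n := N)) => //; rewrite zNu mem0v.
have [ziuU cent_ziu] := iter_z i.
exists (iter i (ad br z) u) => // k /(subvP sKMz) /memv_addP[m mM [_ /vlineP[c ->] ->]].
by rewrite (brDr hL) (brZr hL); apply: memvD; [exact: cent_ziu | exact: memvZ].
Qed.

End EngelTheorem.

Lemma brspace_subv (F : fieldType) (V : vectType F) (br : V -> V -> V)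
    (I J W : {vspace V}) :
  (forall u v, u \in I -> v \in J -> br u v \in W) -> (brspace br I J <= W)%VS.
Proof.
move=> brIJ; apply/span_subvP => _ /allpairsP[[u v] [/= uI vJ ->]].
by apply: brIJ; apply: vbasis_mem.
Qed.

Section UpperCentralSeries.
Variables (F : fieldType) (V : vectType F) (br : V -> V -> V).
Hypothesis hL : is_lie_bracket br.
Variable I : {vspace V}.
Hypotheses (stabI : br_stable br I I) (nilI : ad_nilpotent_on br I I).

Fixpoint upper_central (j : nat) (v : V) : Prop :=
  match j with
  | 0 => v = 0
  | j'.+1 => v \in I /\ forall e, e \in I -> upper_central j' (br v e)
  end.

Lemma upper_central0 j : upper_central j 0.
Proof. by elim: j => //= j IHj; split=> [|e _]; rewrite ?mem0v ?(br0l hL). Qed.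

Lemma upper_central_lin j a u v :
  upper_central j u -> upper_central j v -> upper_central j (a *: u + v).
Proof.
elim: j u v => [|j IHj] u v /=; first by move=> -> ->; rewrite scaler0 addr0.
move=> [uI cent_u] [vI cent_v]; split; first by rewrite memvD ?memvZ.
by move=> e eI; rewrite (lie_linl hL); apply: IHj; [apply: cent_u | apply: cent_v].
Qed.

Lemma upper_centralN j v : upper_central j v -> upper_central j (- v).
Proof.
by move=> Zv; rewrite -scaleN1r -[_ *: _]addr0; apply: upper_central_lin (upper_central0 j).
Qed.

Lemma upper_centralS j v : upper_central j v -> upper_central j.+1 v.
Proof.
elim: j v => [|j IHj] v /=; first by move=> ->; split=> [|e _]; rewrite ?mem0v ?(br0l hL).
by move=> [vI cent_v]; split=> // e eI; apply/IHj/cent_v.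
Qed.

Lemma upper_central_br j v e : upper_central j v -> e \in I -> upper_central j (br v e).
Proof. by move/upper_centralS => [_ cent_v] /cent_v. Qed.

Lemma upper_central_vspace j : exists Z : {vspace V}, forall v, v \in Z <-> upper_central j v.
Proof.
by apply: vspace_of_linear_pred; [apply: upper_central0 | apply: upper_central_lin].
Qed.

(* Engel's theorem makes the series grow strictly until it reaches [I]. *)
Lemma upper_central_grows j (Z : {vspace V}) :
  (forall v, v \in Z <-> upper_central j v) -> (I <= Z)%VS \/ (j <= \dim Z)%N.
Proof.
elim: j Z => [|j IHj] Z memZ; first by right.
have [Zj memZj] := upper_central_vspace j.
case: (boolP (I <= Zj)%VS) => [sIZj | sIZj].
  left; apply/subvP => e eI; apply/memZ; split=> // e' e'I.
  by apply/memZj; apply: (subvP sIZj); apply: stabI.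
have [sIZj' | le_jZj] := IHj Zj memZj; first by rewrite sIZj' in sIZj.
have stabZj : br_stable br I Zj.
  by move=> v e /memZj Zv eI; apply/memZj; apply: upper_central_br.
have [v [vI vZj] cent_v] := engel_quotient hL stabI nilI nilI stabI stabZj sIZj.
right; apply: leq_ltn_trans le_jZj (ltn_dimvS (v := v) _ _ vZj).
- by apply/subvP => w /memZj /upper_centralS /memZ.
- by apply/memZ; split=> // e eI; apply/memZj/cent_v.
Qed.

Lemma upper_central_full e : e \in I -> upper_central (dim V).+1 e.
Proof.
have [Z memZ] := upper_central_vspace (dim V).+1.
case: (upper_central_grows memZ) => [/subvP sIZ /sIZ /memZ // |].
by rewrite ltnNge dimv_le_dim.
Qed.

Lemma lcs_upper_central n k v : (forall e, e \in I -> upper_central n e) ->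
  (k <= n)%N -> v \in lcs br I k -> upper_central (n - k) v.
Proof.
move=> sIZn; elim: k v => [|k IHk] v le_kn /=; first by rewrite subn0; apply: sIZn.
have [Z memZ] := upper_central_vspace (n - k.+1).
suff sLZ : (brspace br I (lcs br I k) <= Z)%VS by move/(subvP sLZ)/memZ.
apply: brspace_subv => e w eI wL; apply/memZ; rewrite (br_anti hL); apply: upper_centralN.
have [_ cent_w] : upper_central (n - k.+1).+1 w.
  by rewrite -subSn // subSS; apply: IHk => //; apply: ltnW.
exact: cent_w e eI.
Qed.

Lemma engel_nilpotent : is_nilpotent br I.
Proof.
exists (dim V).+1; apply/eqP; rewrite -subv0; apply/subvP => v.
by move/(lcs_upper_central upper_central_full (leqnn _)); rewrite subnn => ->; rewrite mem0v.
Qed.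

End UpperCentralSeries.

Theorem theorem2p2 (F : fieldType) (hF : [pchar F] =i pred0)
    (V : vectType F) (br : V -> V -> V) (hL : is_lie_bracket br) :
  (exists E : {vspace V},
      (forall y : V, y \in E <-> engel_elt br y) /\ is_char_ideal br E) /\
  (forall N : {vspace V}, is_nilradical br N ->
      forall y : V, engel_elt br y -> y \in N).
Proof.
have [E memE] := engel_elt_vspace hL.
have E_char : is_char_ideal br E.
  split=> [y x | D derD y] /memE engel_y; apply/memE.
    exact: engel_elt_derivation hF (ad_derivation hL x) engel_y.
  exact: engel_elt_derivation hF derD engel_y.
have E_nil : is_nilpotent br E.
  apply: (engel_nilpotent hL) => [u k uE _ | a b _ /memE engel_b].
    exact: E_char.1.
  exact: engel_b.
split; first by exists E.
move=> N [_ _ maxN] y /memE yE.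
exact: subvP (maxN E E_char.1 E_nil) y yE.
Qed.
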